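(* Let $S:\mathbb{R}^n\to\mathbb{R}^n$ be nonexpansive (i.e. $\|Su-Sv\|\le\|u-v\|$ for all $u,v$) and suppose $S$ has a fixed point $w^\star$, i.e. $Sw^\star=w^\star$. Let $w^1\in\mathbb{R}^n$ and define the sequence $\{w^k\}$ by $w^{k+1}=\tfrac12 w^k+\tfrac12 Sw^k$ for $k\ge 1$. Then for every integer $N\ge 1$, $$\left\|\tfrac12 Sw^N-\tfrac12 w^N\right\|^2\le \frac{(N-1)^{N-1}}{N^N}\,\|w^1-w^\star\|^2,$$ with the convention $0^0=1$. *)

From mathcomp Require Import all_boot all_order all_algebra.
Set Implicit Arguments. Unset Strict Implicit. Unset Printing Implicit Defensive.
Import Order.TTheory GRing.Theory Num.Theory.
Local Open Scope ring_scope.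

Definition enorm (R : rcfType) (n : nat) (x : 'rV[R]_n) : R :=
  Num.sqrt (\sum_(i < n) x 0 i ^+ 2).

Definition nonexpansive (R : rcfType) (n : nat) (S : 'rV[R]_n -> 'rV[R]_n) : Prop :=
  forall u v, enorm (S u - S v) <= enorm (u - v).

(* Write x_k = w_k - w* and let V_j be the potential below, a quadratic form in
   x_j and x_(j+1) with coefficients depending on s = N/(N-1).  Nonexpansiveness
   of S, applied to the pairs (w_k, w* ) and (w_k, w_(k+1)), together with the
   positivity of the Gram matrix of x_k, x_(k+1), x_(k+2), makes
   V_j - s V_(j+1) a nonnegative combination of squared norms.  Hence
   V_(N-1) <= s^(2-N) ||x_1||^2, and the residual ||x_(N+1) - x_N||^2 is at most
   (N-1)/N^2 V_(N-1); multiplying out gives (N-1)^(N-1)/N^N. *)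
From mathcomp Require Import all_boot all_order all_algebra.
From mathcomp Require Import ring lra.

Set Implicit Arguments.
Unset Strict Implicit.
Unset Printing Implicit Defensive.
Import Order.TTheory GRing.Theory Num.Theory.
Local Open Scope ring_scope.

Lemma step_ratio_le (R : realFieldType) (m j : nat) (s : R) :
  1 <= s -> m%:R * s <= m.+1%:R -> (j < m)%N -> j.+1%:R * s <= j.+2%:R.
Proof.
move=> s_ge1 ms_le jm.
have : j.+1%:R <= m%:R :> R by rewrite ler_nat.
rewrite -[j.+2%:R]natr1 -[m.+1%:R]natr1 in ms_le *; nra.
Qed.

Section GramPotential.
Variables (R : realFieldType) (g : nat -> nat -> R).

(* [g i j] plays the role of the inner product <x_i, x_j>, so [quad3 k a b c]
   is ||a x_k + b x_(k+1) + c x_(k+2)||^2. *)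
Definition quad3 (k : nat) (a b c : R) : R :=
  a ^+ 2 * g k k + b ^+ 2 * g k.+1 k.+1 + c ^+ 2 * g k.+2 k.+2
  + 2 * a * b * g k k.+1 + 2 * a * c * g k k.+2 + 2 * b * c * g k.+1 k.+2.

Definition potential (s : R) (j : nat) : R :=
  j%:R * g j j - 2 * j%:R * (2 - s) * g j j.+1
  + (4 * j%:R - (3 * j%:R - 1) * s) * g j.+1 j.+1.

Hypothesis quad3_ge0 : forall k a b c, 0 <= quad3 k a b c.
(* ||S w_k - w*|| <= ||w_k - w*||, with S w_k - w* = 2 x_(k+1) - x_k. *)
Hypothesis quad3_fixed : forall k, (1 <= k)%N ->
  quad3 k (-1) 2 0 <= quad3 k 1 0 0.
(* ||S w_k - S w_(k+1)|| <= ||w_k - w_(k+1)||. *)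
Hypothesis quad3_consecutive : forall k, (1 <= k)%N ->
  quad3 k (-1) 3 (-2) <= quad3 k 1 (-1) 0.

Lemma potential1_le (s : R) : s <= 2 -> potential s 1 <= g 1 1.
Proof.
move=> s_le2; have := @quad3_fixed 1 isT; rewrite /quad3 => fix1.
have gap : 0 <= (2 - s) * (g 1 2 - g 2 2) by apply: mulr_ge0; lra.
by rewrite /potential /=; lra.
Qed.

Lemma potential_succ_le (s : R) (j : nat) : (1 <= j)%N -> 0 <= s ->
  j.+1%:R * s <= j.+2%:R -> s * potential s j.+1 <= potential s j.
Proof.
move=> j_ge1 s_ge0 js_le.
have fixj := @quad3_fixed j.+1 isT.
have consj := quad3_consecutive j_ge1.
rewrite -subr_ge0.
have -> : potential s j - s * potential s j.+1 =
    s * (j.+2%:R - j.+1%:R * s) / 2 * (quad3 j.+1 1 0 0 - quad3 j.+1 (-1) 2 0)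
    + j%:R * s / 2 * (quad3 j 1 (-1) 0 - quad3 j (-1) 3 (-2))
    + j%:R * quad3 j 1 (-2) s.
  by rewrite /potential /quad3 -(natr1 j.+1) -(natr1 j); field.
apply: addr_ge0; first apply: addr_ge0.
- by apply: mulr_ge0; rewrite ?divr_ge0 ?mulr_ge0 // subr_ge0.
- by apply: mulr_ge0; rewrite ?divr_ge0 ?mulr_ge0 // subr_ge0.
- exact: mulr_ge0.
Qed.

Lemma potential_le_geometric (s : R) (m : nat) : 1 <= s ->
  m%:R * s <= m.+1%:R ->
  forall j, (1 <= j)%N -> (j <= m)%N -> s ^+ j.-1 * potential s j <= g 1 1.
Proof.
move=> s_ge1 ms_le; have s_ge0 : 0 <= s := le_trans ler01 s_ge1.
elim=> [//|[|j] IHj _ jm].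
  by rewrite mul1r potential1_le //; have := step_ratio_le s_ge1 ms_le jm; lra.
apply: le_trans (IHj isT (ltnW jm)); rewrite /= exprSr -mulrA.
apply: ler_wpM2l; first exact: exprn_ge0.
exact: (@potential_succ_le s j.+1 isT s_ge0 (step_ratio_le s_ge1 ms_le jm)).
Qed.

Lemma residual_le_potential (j : nat) : (1 <= j)%N ->
  quad3 j.+1 (-1) 1 0
    <= j%:R / j.+1%:R ^+ 2 * potential (j.+1%:R / j%:R) j.
Proof.
move=> j_ge1; rewrite -(natr1 j); set m : R := j%:R; set s := (m + 1) / m.
have m_ge1 : 1 <= m by rewrite ler1n.
have fixj := @quad3_fixed j.+1 isT.
have consj := quad3_consecutive j_ge1.
rewrite -subr_ge0.
have -> : m / (m + 1) ^+ 2 * potential s j - quad3 j.+1 (-1) 1 0 =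
    (2 * (m + 1))^-1 * (quad3 j.+1 1 0 0 - quad3 j.+1 (-1) 2 0)
    + m / (m + 1) / 2 * (quad3 j 1 (-1) 0 - quad3 j (-1) 3 (-2))
    + (m / (m + 1)) ^+ 2 * quad3 j 1 (-2) s.
  by rewrite /potential /quad3 /s -/m; field; rewrite !gt_eqF //; lra.
apply: addr_ge0; first apply: addr_ge0.
- by apply: mulr_ge0; rewrite ?invr_ge0 ?subr_ge0 //; lra.
- by apply: mulr_ge0; rewrite ?divr_ge0 ?subr_ge0 //; lra.
- exact: mulr_ge0 (sqr_ge0 _) (quad3_ge0 _ _ _ _).
Qed.

Lemma residual_rate (N : nat) : (1 <= N)%N ->
  quad3 N (-1) 1 0 <= (N.-1 ^ N.-1)%N%:R / (N ^ N)%N%:R * g 1 1.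
Proof.
case: N => [//|[_|j _]].
  have := @quad3_fixed 1 isT; have := quad3_ge0 2 1 0 0.
  by rewrite /= expn0 expn1 divr1 mul1r /quad3; lra.
set m : R := j.+1%:R; set s := j.+2%:R / m.
have m_gt0 : 0 < m by rewrite ltr0n.
have s_ge1 : 1 <= s by rewrite ler_pdivlMr // mul1r ler_nat.
have s_gt0 : 0 < s := lt_le_trans ltr01 s_ge1.
have ms_le : m * s <= j.+2%:R by rewrite mulrC divfK ?gt_eqF.
have Vle := potential_le_geometric s_ge1 ms_le (ltn0Sn j) (leqnn _).
rewrite /= in Vle; rewrite /= !natrX -/m.
apply: le_trans (residual_le_potential (ltn0Sn j)) _; rewrite -/m -/s.
have -> : m ^+ j.+1 / j.+2%:R ^+ j.+2 = m / j.+2%:R ^+ 2 * s^-1 ^+ j.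
  rewrite /s invf_div expr_div_n !exprS -/m; field.
  by rewrite expf_neq0 ?pnatr_eq0 // -natrD pnatr_eq0.
rewrite -[_ * g 1 1]mulrA; apply: ler_wpM2l.
  by rewrite divr_ge0 ?exprn_ge0 ?ler0n.
by rewrite exprVn ler_pdivlMl ?exprn_gt0.
Qed.

End GramPotential.

Section DotProduct.
Variables (R : rcfType) (n : nat).

Definition dot (u v : 'rV[R]_n) : R := \sum_(i < n) u 0 i * v 0 i.

Lemma dot_ge0 u : 0 <= dot u u.
Proof. by apply: sumr_ge0 => i _; rewrite -expr2 sqr_ge0. Qed.

Lemma sqr_enorm u : enorm u ^+ 2 = dot u u.
Proof. by rewrite /enorm sqr_sqrtr // dot_ge0. Qed.

Lemma nonexpansive_dot (S : 'rV[R]_n -> 'rV[R]_n) u v : nonexpansive S ->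
  dot (S u - S v) (S u - S v) <= dot (u - v) (u - v).
Proof. by move=> /(_ u v); rewrite /enorm ler_sqrt // dot_ge0. Qed.

Definition gram (x : nat -> 'rV[R]_n) (i j : nat) : R := dot (x i) (x j).

Lemma quad3_gram x k a b c :
  quad3 (gram x) k a b c
    = dot (a *: x k + b *: x k.+1 + c *: x k.+2) (a *: x k + b *: x k.+1 + c *: x k.+2).
Proof.
rewrite /quad3 /gram /dot !mulr_sumr -!big_split /=.
by apply: eq_bigr => i _; rewrite !mxE; ring.
Qed.

End DotProduct.

Theorem theorem1 (R : rcfType) (n : nat) (S : 'rV[R]_n -> 'rV[R]_n)
  (wstar : 'rV[R]_n) (w : nat -> 'rV[R]_n) :
  nonexpansive S ->
  S wstar = wstar ->
  (forall k, (1 <= k)%N -> w k.+1 = 2^-1 *: w k + 2^-1 *: S (w k)) ->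
  forall N : nat, (1 <= N)%N ->
    enorm (2^-1 *: S (w N) - 2^-1 *: w N) ^+ 2
      <= ((N.-1 ^ N.-1)%N%:R / (N ^ N)%N%:R) * enorm (w 1%N - wstar) ^+ 2.
Proof.
move=> S_ne S_fix w_step N N_ge1.
set x := fun k => w k - wstar.
have S_iter k : (1 <= k)%N -> S (w k) = 2 *: x k.+1 - x k + wstar.
  by move=> k_ge1; apply/rowP => l; rewrite /x (w_step k k_ge1) !mxE; field.
have residual : 2^-1 *: S (w N) - 2^-1 *: w N = -1 *: x N + 1 *: x N.+1 + 0 *: x N.+2.
  by apply/rowP => l; rewrite S_iter // /x !mxE; field.
rewrite residual !sqr_enorm -quad3_gram.
apply: (residual_rate (g := gram x)) => // [k a b c|k k_ge1|k k_ge1]; rewrite !quad3_gram.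
- exact: dot_ge0.
- have <- : S (w k) - S wstar = -1 *: x k + 2 *: x k.+1 + 0 *: x k.+2.
    by apply/rowP => l; rewrite S_fix S_iter // !mxE; ring.
  have <- : w k - wstar = 1 *: x k + 0 *: x k.+1 + 0 *: x k.+2.
    by apply/rowP => l; rewrite /x !mxE; ring.
  exact: nonexpansive_dot.
- have <- : S (w k) - S (w k.+1) = -1 *: x k + 3 *: x k.+1 + -2 *: x k.+2.
    by apply/rowP => l; rewrite !S_iter // !mxE; ring.
  have <- : w k - w k.+1 = 1 *: x k + -1 *: x k.+1 + 0 *: x k.+2.
    by apply/rowP => l; rewrite /x !mxE; ring.
  exact: nonexpansive_dot.
Qed.
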